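(* Let $k\ge 2$ be an integer and let $b$ be a nonzero real number. Then $$\Im\left(\sum_{j=0}^{\infty}\frac{1}{(i j+b)^k}\right)=-\frac{(2\pi)^k}{2}\int_{0}^{1}\sum_{j=1}^{k}\frac{c_j(b)\left(u^{k-j}e^{-2\pi b u}-e^{-2\pi b}\right)}{(j-1)!\,(k-j)!}\cot(\pi u)\,du,$$ where $c_j(b)=\delta_{1j}+\mathrm{Li}_{1-j}(e^{-2\pi b})$.
   Context: $i$ denotes the imaginary unit. $\delta_{1j}$ is the Kronecker delta. $\mathrm{Li}_s(z)$ is the polylogarithm, the analytic continuation of $\sum_{m\ge1} z^m/m^s$; for $s=1-j\le 0$ it is a rational function of $z$, defined for $z\ne1$. *)

From Stdlib Require Import Reals Factorial.
Open Scope R_scope.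

Definition Cmul (z w : R * R) : R * R :=
  (fst z * fst w - snd z * snd w, fst z * snd w + snd z * fst w).
Fixpoint Cpow (z : R * R) (n : nat) : R * R :=
  match n with O => (1, 0) | S m => Cmul z (Cpow z m) end.
Definition Cinv (z : R * R) : R * R :=
  (fst z / (fst z ^ 2 + snd z ^ 2), - snd z / (fst z ^ 2 + snd z ^ 2)).
Definition Im (z : R * R) : R := snd z.

Definition term (k : nat) (b : R) (j : nat) : R * R :=
  Cinv (Cpow (b, INR j) k).

Fixpoint stirling2 (n k : nat) : nat :=
  match n, k with
  | O, O => 1%nat
  | O, S _ => 0%nat
  | S _, O => 0%nat
  | S n', S k' => ((S k') * stirling2 n' (S k') + stirling2 n' k')%nat
  end.

(* Li_{-n}(z), n >= 0, as the rational function (analytic continuation of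
   sum_{m>=1} m^n z^m), defined for z <> 1:
   Li_{-n}(z) = sum_{r=0}^{n} r! S(n+1,r+1) (z/(1-z))^(r+1). *)
Definition Li_neg (n : nat) (z : R) : R :=
  sum_f_R0 (fun r => INR (fact r) * INR (stirling2 (S n) (S r)) * (z / (1 - z)) ^ (S r)) n.

Definition c (j : nat) (b : R) : R :=
  (if Nat.eqb j 1 then 1 else 0) + Li_neg (j - 1) (exp (- 2 * PI * b)).

Definition cot (x : R) : R := cos x / sin x.

Definition integrand (k : nat) (b : R) (u : R) : R :=
  sum_f_R0 (fun i =>
     let j := S i in
     c j b * (u ^ (k - j) * exp (- 2 * PI * b * u) - exp (- 2 * PI * b))
       / (INR (fact (j - 1)) * INR (fact (k - j)))) (k - 1)
  * cot (PI * u).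

Definition improper_integral_01 (f : R -> R) (I : R) : Prop :=
  (forall a b, 0 < a -> a <= b -> b < 1 -> inhabited (Riemann_integrable f a b)) /\
  (forall eps, eps > 0 -> exists delta, delta > 0 /\
     forall a b (pr : Riemann_integrable f a b),
       0 < a < delta -> 1 - delta < b < 1 ->
       Rabs (RiemannInt pr - I) < eps).

From Coquelicot Require Import Coquelicot.
From Stdlib Require Import Reals Lra Lia Factorial.
Open Scope R_scope.

(* Write [Q_m = cpoly_exp b m], i.e.
   [Q_m(u) = e^(-2 pi b u) sum_(j=1..m) c_j(b) u^(m-j) / ((j-1)! (m-j)!)], so that the integrand
   is [g(u) cot(pi u)] with [g = Q_k - Q_k(1)].  One has [Q_(m+1)' = Q_m - 2 pi b Q_(m+1)], and the
   identity [Li_(-n)(q) = q (1 + sum_(i<=n) C(n,i) Li_(-i)(q))] gives [Q_(m+1)(1) = Q_(m+1)(0)]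
   for [m > 0].  Integrating by parts against [e^(-2 pi i n u)] then yields
   [int_0^1 Q_k(u) e^(-2 pi i n u) du = (2 pi (b + i n))^(-k)], hence
   [Im (1 / (i n + b)^k) = -(2 pi)^k y_n] for the sine coefficients [y_n] of [g], and
   [y_n = O(n^(-2))] since [k >= 2].  On the other side, the conjugate Poisson kernel
   [P_r(t) = 2 sum_n r^n sin(n t)] gives [int_0^1 g(u) P_r(2 pi u) du = 2 sum_n y_n r^n], which
   tends to [2 sum_n y_n] as [r -> 1-] by Abel's theorem; and since [g(0) = g(1) = 0] while
   [P_r(2 pi u) -> cot(pi u)] boundedly and locally uniformly on (0,1), the same limit is the
   improper integral of [g(u) cot(pi u)]. *)

Fixpoint sum_lt (f : nat -> R) (n : nat) : R :=
  match n with O => 0 | S m => sum_lt f m + f m end.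

Lemma sum_lt_ext f g n :
  (forall i, (i < n)%nat -> f i = g i) -> sum_lt f n = sum_lt g n.
Proof.
  induction n as [|n IH]; intros Hfg; simpl; [reflexivity|].
  rewrite IH by (intros; apply Hfg; lia). now rewrite Hfg by lia.
Qed.

Lemma sum_lt_plus f g n : sum_lt (fun i => f i + g i) n = sum_lt f n + sum_lt g n.
Proof. induction n as [|n IH]; simpl; [|rewrite IH]; ring. Qed.

Lemma sum_lt_minus f g n : sum_lt (fun i => f i - g i) n = sum_lt f n - sum_lt g n.
Proof. induction n as [|n IH]; simpl; [|rewrite IH]; ring. Qed.

Lemma sum_lt_scal a f n : sum_lt (fun i => a * f i) n = a * sum_lt f n.
Proof. induction n as [|n IH]; simpl; [|rewrite IH]; ring. Qed.

Lemma sum_lt_shift f n : sum_lt f (S n) = f O + sum_lt (fun i => f (S i)) n.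
Proof. induction n as [|n IH]; simpl in *; [|rewrite IH]; ring. Qed.

Lemma sum_lt_eq0 f n : (forall i, (i < n)%nat -> f i = 0) -> sum_lt f n = 0.
Proof.
  intros Hf. rewrite (sum_lt_ext f (fun _ => 0)) by exact Hf.
  clear Hf. induction n as [|n IH]; simpl; [|rewrite IH]; ring.
Qed.

Lemma sum_f_R0_sum_lt f n : sum_f_R0 f n = sum_lt f (S n).
Proof. induction n as [|n IH]; simpl; [ring|now rewrite IH]. Qed.

Lemma sum_lt_pascal f n :
  sum_lt (fun i => Binomial.C (S n) i * f i) (S n) =
  sum_lt (fun i => Binomial.C n i * f i) (S n) + sum_lt (fun i => Binomial.C n i * f (S i)) n.
Proof.
  rewrite !sum_lt_shift, !C_n_0.
  rewrite (sum_lt_ext _ (fun i => Binomial.C n (S i) * f (S i) + Binomial.C n i * f (S i)))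
    by (intros i Hi; rewrite <- pascal by lia; ring).
  rewrite sum_lt_plus; ring.
Qed.

Lemma is_derive_mult_R (f g : R -> R) (x df dg : R) :
  is_derive f x df -> is_derive g x dg -> is_derive (fun t => f t * g t) x (df * g x + f x * dg).
Proof. intros Hf Hg. exact (is_derive_mult f g x df dg Hf Hg (fun _ _ => Rmult_comm _ _)). Qed.

Lemma is_derive_sum_lt (F : nat -> R -> R) (F' : nat -> R) n (x : R) :
  (forall i, (i < n)%nat -> is_derive (F i) x (F' i)) ->
  is_derive (fun y => sum_lt (fun i => F i y) n) x (sum_lt F' n).
Proof.
  induction n as [|n IH]; simpl; intros HF.
  - auto_derive; auto.
  - apply (is_derive_plus (fun y => sum_lt (fun i => F i y) n) (F n)).
    + apply IH; intros; apply HF; lia.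
    + apply HF; lia.
Qed.

Lemma continuous_of_derive (f df : R -> R) x : is_derive f x (df x) -> continuous f x.
Proof. intros Hf. apply (ex_derive_continuous (V := R_NormedModule)). now exists (df x). Qed.

Lemma continuous_cos_lin w x : continuous (fun u => cos (w * u)) x.
Proof. apply (continuous_of_derive _ (fun u => - w * sin (w * u))). auto_derive; auto; ring. Qed.

Lemma continuous_sin_lin w x : continuous (fun u => sin (w * u)) x.
Proof. apply (continuous_of_derive _ (fun u => w * cos (w * u))). auto_derive; auto; ring. Qed.

Lemma continuous_bounded (h : R -> R) a b : a <= b -> (forall u, continuous h u) ->
  exists M, forall u, a <= u <= b -> Rabs (h u) <= M.
Proof.
  intros Hab Hh. destruct (continuity_ab_maj (fun u => Rabs (h u)) a b Hab) as [x [Hx _]].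
  - intros u _. apply continuity_pt_filterlim, continuous_Rabs_comp, Hh.
  - exists (Rabs (h x)). exact Hx.
Qed.

Lemma is_RInt_unique_R (f : R -> R) a b l1 l2 : is_RInt f a b l1 -> is_RInt f a b l2 -> l1 = l2.
Proof. intros H1 H2. now rewrite <- (is_RInt_unique _ _ _ _ H1), (is_RInt_unique _ _ _ _ H2). Qed.

Lemma is_RInt_ext_R (f g : R -> R) a b l :
  (forall x, f x = g x) -> is_RInt f a b l -> is_RInt g a b l.
Proof. intros Hfg. apply is_RInt_ext. intros x _; apply Hfg. Qed.

Lemma is_RInt_const_R (c a b : R) : is_RInt (fun _ => c) a b ((b - a) * c).
Proof. exact (is_RInt_const (V := R_NormedModule) a b c). Qed.

Lemma is_RInt_plus_R (f g : R -> R) a b (lf lg : R) :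
  is_RInt f a b lf -> is_RInt g a b lg -> is_RInt (fun x => f x + g x) a b (lf + lg).
Proof. exact (is_RInt_plus (V := R_NormedModule) f g a b lf lg). Qed.

Lemma is_RInt_minus_R (f g : R -> R) a b (lf lg : R) :
  is_RInt f a b lf -> is_RInt g a b lg -> is_RInt (fun x => f x - g x) a b (lf - lg).
Proof. exact (is_RInt_minus (V := R_NormedModule) f g a b lf lg). Qed.

Lemma is_RInt_scal_R (f : R -> R) a b (k lf : R) :
  is_RInt f a b lf -> is_RInt (fun x => k * f x) a b (k * lf).
Proof. exact (is_RInt_scal (V := R_NormedModule) f a b k lf). Qed.

Lemma is_RInt_Chasles_R (f : R -> R) a b c (l1 l2 : R) :
  is_RInt f a b l1 -> is_RInt f b c l2 -> is_RInt f a c (l1 + l2).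
Proof. exact (is_RInt_Chasles (V := R_NormedModule) f a b c l1 l2). Qed.

Lemma is_RInt_continuous_on (f : R -> R) a b : a <= b ->
  (forall x, a <= x <= b -> continuous f x) -> is_RInt f a b (RInt f a b).
Proof.
  intros Hab Hf. apply (RInt_correct (V := R_CompleteNormedModule)), ex_RInt_continuous.
  intros x Hx. rewrite Rmin_left, Rmax_right in Hx by exact Hab. now apply Hf.
Qed.

Lemma RInt_eq_0 (f : R -> R) a b : (forall x, f x = 0) -> RInt f a b = 0.
Proof.
  intros Hf. rewrite (RInt_ext _ (fun _ => 0)) by (intros x _; apply Hf).
  rewrite RInt_const. unfold scal; simpl; unfold mult; simpl; ring.
Qed.

Lemma is_RInt_abs_le (f : R -> R) a b (l M : R) : a <= b -> is_RInt f a b l ->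
  (forall x, a < x < b -> Rabs (f x) <= M) -> Rabs l <= (b - a) * M.
Proof.
  intros Hab Hf HM. assert (Hc := fun c => is_RInt_const_R c a b).
  apply Rabs_le; split.
  - replace (- ((b - a) * M)) with ((b - a) * - M) by ring.
    apply (is_RInt_le _ f a b _ l Hab (Hc _) Hf).
    intros x Hx. specialize (HM x Hx). apply Rabs_le_between in HM. lra.
  - apply (is_RInt_le f _ a b l _ Hab Hf (Hc _)).
    intros x Hx. specialize (HM x Hx). apply Rabs_le_between in HM. lra.
Qed.

Lemma Rabs_sub_le_of_derive (g g' : R -> R) (M a b : R) : a <= b ->
  (forall x, is_derive g x (g' x)) -> (forall x, continuous g' x) ->
  (forall x, a < x < b -> Rabs (g' x) <= M) -> Rabs (g b - g a) <= (b - a) * M.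
Proof.
  intros Hab Hg Hg' HM. apply (is_RInt_abs_le g' a b _ M Hab); [|exact HM].
  apply (is_RInt_derive g g'); intros x _; [apply Hg|apply Hg'].
Qed.

Lemma is_RInt_parts (f g df dg : R -> R) a b :
  (forall x, is_derive f x (df x)) -> (forall x, is_derive g x (dg x)) ->
  (forall x, continuous df x) -> (forall x, continuous dg x) ->
  is_RInt (fun x => df x * g x + f x * dg x) a b (f b * g b - f a * g a).
Proof.
  intros Hf Hg Hdf Hdg.
  apply (is_RInt_derive (fun x => f x * g x)); intros x _.
  - now apply is_derive_mult_R.
  - apply (continuous_plus (V := R_NormedModule)); apply (continuous_mult (K := R_AbsRing));
      eauto using continuous_of_derive.
Qed.

Lemma is_RInt_sin_2PI_n n : is_RInt (fun u => sin (2 * PI * INR n * u)) 0 1 0.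
Proof.
  destruct n as [|n].
  - assert (H0 := is_RInt_const_R 0 0 1). rewrite Rmult_0_r in H0.
    apply (is_RInt_ext_R (fun _ => 0)); [|exact H0].
    intros u. simpl. rewrite Rmult_0_r, Rmult_0_l, sin_0. reflexivity.
  - set (w := 2 * PI * INR (S n)).
    assert (Hw : 0 < w)
      by (unfold w; pose proof PI_RGT_0; pose proof (lt_0_INR (S n) ltac:(lia)); nra).
    assert (Hint : is_RInt (fun u => sin (w * u)) 0 1 (- cos (w * 1) / w - - cos (w * 0) / w)).
    { apply (is_RInt_derive (fun u => - cos (w * u) / w)); intros x _.
      - auto_derive; auto. field. lra.
      - apply continuous_sin_lin. }
    replace (- cos (w * 1) / w - - cos (w * 0) / w) with 0 in Hint; [exact Hint|].
    unfold w at 1. replace (2 * PI * INR (S n) * 1) with (0 + 2 * INR (S n) * PI) by ring.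
    rewrite cos_period, Rmult_0_r, cos_0. field. lra.
Qed.

(** * The polylogarithm identity *)

Lemma stirling2_lt n m : (n < m)%nat -> stirling2 n m = O.
Proof.
  revert m; induction n as [|n IH]; intros [|m] Hm; simpl; try lia.
  rewrite !IH by lia; lia.
Qed.

Lemma stirling2_1 n : stirling2 (S n) 1 = 1%nat.
Proof. induction n as [|n IH]; [reflexivity|]. simpl in *. now rewrite IH. Qed.

Definition stirling_coef (n r : nat) : R := INR (fact r) * INR (stirling2 (S n) (S r)).

Lemma stirling_coef_0 n : stirling_coef n 0 = 1.
Proof. unfold stirling_coef. rewrite stirling2_1. simpl; ring. Qed.

Lemma stirling_coef_overflow n : stirling_coef n (S n) = 0.
Proof. unfold stirling_coef. rewrite stirling2_lt by lia. simpl; ring. Qed.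

Lemma stirling_coef_S n r :
  stirling_coef (S n) r = INR (S r) * stirling_coef n r + INR r * stirling_coef n (pred r).
Proof.
  destruct r as [|r].
  - rewrite !stirling_coef_0. simpl; ring.
  - unfold stirling_coef.
    change (stirling2 (S (S n)) (S (S r)))
      with (S (S r) * stirling2 (S n) (S (S r)) + stirling2 (S n) (S r))%nat.
    change (fact (S r)) with (S r * fact r)%nat.
    rewrite plus_INR, !mult_INR. simpl pred. ring.
Qed.

Definition Li_neg_poly (n : nat) (w : R) : R :=
  sum_lt (fun r => stirling_coef n r * w ^ S r) (S n).

Definition Li_neg_poly' (n : nat) (w : R) : R :=
  sum_lt (fun r => stirling_coef n r * INR (S r) * w ^ r) (S n).

Lemma Li_neg_Li_neg_poly n z : Li_neg n z = Li_neg_poly n (z / (1 - z)).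
Proof. unfold Li_neg, Li_neg_poly, stirling_coef. now rewrite sum_f_R0_sum_lt. Qed.

Lemma Li_neg_poly_0 w : Li_neg_poly 0 w = w.
Proof. unfold Li_neg_poly. simpl. rewrite stirling_coef_0. ring. Qed.

Lemma is_derive_Li_neg_poly n (w : R) : is_derive (Li_neg_poly n) w (Li_neg_poly' n w).
Proof.
  apply (is_derive_sum_lt (fun r y => stirling_coef n r * y ^ S r)).
  intros r _. auto_derive; [exact I|].
  change (match r with O => 1 | S _ => INR r + 1 end) with (INR (S r)). ring.
Qed.

(* [Li_(-(n+1)) = z d/dz Li_(-n)], and [z d/dz = w (1 + w) d/dw]. *)
Lemma Li_neg_poly_S n w : Li_neg_poly (S n) w = w * (1 + w) * Li_neg_poly' n w.
Proof.
  unfold Li_neg_poly, Li_neg_poly'.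
  rewrite (sum_lt_ext _ (fun r => INR (S r) * stirling_coef n r * w ^ S r
                              + INR r * stirling_coef n (pred r) * w ^ S r))
    by (intros r _; rewrite stirling_coef_S; ring).
  rewrite sum_lt_plus.
  change (sum_lt ?f (S (S n))) with (sum_lt f (S n) + f (S n)) at 1.
  cbv beta. rewrite stirling_coef_overflow, (sum_lt_shift (fun i => INR i * _ * _)).
  rewrite <- sum_lt_scal. simpl INR at 2. rewrite Rmult_0_r, !Rmult_0_l, Rplus_0_r, Rplus_0_l.
  rewrite <- sum_lt_plus. apply sum_lt_ext; intros r _. rewrite !S_INR. simpl. ring.
Qed.

(* Differentiate the identity for [n] and apply [Li_neg_poly_S]. *)
Lemma Li_neg_poly_binomial n w :
  Li_neg_poly n w = w * (1 + sum_lt (fun i => Binomial.C n i * Li_neg_poly i w) n).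
Proof.
  revert w; induction n as [|n IH]; intros w.
  { rewrite Li_neg_poly_0; simpl; ring. }
  set (S' := sum_lt (fun i => Binomial.C n i * Li_neg_poly' i w) n).
  assert (Hderiv : Li_neg_poly' n w =
                   1 + sum_lt (fun i => Binomial.C n i * Li_neg_poly i w) n + w * S').
  { assert (Hsum : is_derive (fun y => 1 + sum_lt (fun i => Binomial.C n i * Li_neg_poly i y) n)
                     w (0 + S')).
    { apply (is_derive_plus (fun _ => 1)); [auto_derive; auto|].
      apply (is_derive_sum_lt (fun i y => Binomial.C n i * Li_neg_poly i y)).
      intros i _. apply (is_derive_scal (Li_neg_poly i)), is_derive_Li_neg_poly. }
    rewrite <- (is_derive_unique _ _ _ (is_derive_Li_neg_poly n w)), (Derive_ext _ _ w IH).
    apply is_derive_unique.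
    replace (1 + _ + w * S') with
      (1 * (1 + sum_lt (fun i => Binomial.C n i * Li_neg_poly i w) n) + w * (0 + S')) by ring.
    exact (is_derive_mult_R _ _ w _ _ (is_derive_id w) Hsum). }
  rewrite Li_neg_poly_S, sum_lt_pascal, Hderiv. simpl sum_lt at 2.
  rewrite C_n_n, IH.
  rewrite (sum_lt_ext (fun i => Binomial.C n i * Li_neg_poly (S i) w)
                      (fun i => w * (1 + w) * (Binomial.C n i * Li_neg_poly' i w)))
    by (intros i _; rewrite Li_neg_poly_S; ring).
  rewrite sum_lt_scal. fold S'. ring.
Qed.

Lemma Li_neg_binomial n z : z <> 1 ->
  Li_neg n z = z * (1 + sum_lt (fun i => Binomial.C n i * Li_neg i z) (S n)).
Proof.
  intros Hz. set (w := z / (1 - z)).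
  assert (Hw : z * (1 + w) = w) by (unfold w; field; lra).
  rewrite (sum_lt_ext _ (fun i => Binomial.C n i * Li_neg_poly i w))
    by (intros; now rewrite Li_neg_Li_neg_poly).
  rewrite Li_neg_Li_neg_poly; fold w.
  change (sum_lt ?f (S n)) with (sum_lt f n + f n); cbv beta.
  rewrite C_n_n, Li_neg_poly_binomial.
  set (S := sum_lt _ n).
  transitivity (z * (1 + w) * (1 + S)); [rewrite Hw|]; ring.
Qed.

(** * The functions [Q_m] *)

Definition cpoly (b : R) (m : nat) (u : R) : R :=
  sum_lt (fun i => c (S i) b * u ^ (m - S i) / (INR (fact i) * INR (fact (m - S i)))) m.

Definition cpoly_exp (b : R) (m : nat) (u : R) : R := cpoly b m u * exp (- 2 * PI * b * u).

Lemma is_derive_cpoly b m (u : R) : is_derive (cpoly b (S m)) u (cpoly b m u).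
Proof.
  unfold cpoly.
  replace (sum_lt _ m) with
    (sum_lt (fun i => c (S i) b * (INR (S m - S i) * u ^ pred (S m - S i))
                      / (INR (fact i) * INR (fact (S m - S i)))) (S m)).
  - apply (is_derive_sum_lt
             (fun i y => c (S i) b * y ^ (S m - S i) / (INR (fact i) * INR (fact (S m - S i))))).
    intros i _. auto_derive; [exact I|].
    change (S m - S i)%nat with (m - i)%nat.
    unfold Rdiv; ring.
  - simpl sum_lt at 1. rewrite Nat.sub_diag. simpl INR.
    rewrite Rmult_0_l, Rmult_0_r, Rdiv_0_l, Rplus_0_r.
    apply sum_lt_ext; intros i Hi.
    replace (m - i)%nat with (S (m - S i)) by lia.
    change (fact (S (m - S i))) with (S (m - S i) * fact (m - S i))%nat.
    rewrite mult_INR. simpl pred. field.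
    repeat split; try apply INR_fact_neq_0. apply not_0_INR; lia.
Qed.

Lemma cpoly_exp_0 b u : cpoly_exp b 0 u = 0.
Proof. unfold cpoly_exp, cpoly; simpl; ring. Qed.

Lemma is_derive_cpoly_exp b m u :
  is_derive (cpoly_exp b (S m)) u (cpoly_exp b m u - 2 * PI * b * cpoly_exp b (S m) u).
Proof.
  unfold cpoly_exp.
  replace (_ - _) with (cpoly b m u * exp (- 2 * PI * b * u)
                        + cpoly b (S m) u * (- 2 * PI * b * exp (- 2 * PI * b * u))) by ring.
  apply (is_derive_mult_R (cpoly b (S m)) (fun t => exp (- 2 * PI * b * t))).
  - apply is_derive_cpoly.
  - auto_derive; auto. ring.
Qed.

Lemma continuous_cpoly_exp b m u : continuous (cpoly_exp b m) u.
Proof.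
  destruct m as [|m].
  - apply (continuous_ext (fun _ => 0)); [intros; symmetry; apply cpoly_exp_0|].
    apply continuous_const.
  - apply (continuous_of_derive _ (fun x => cpoly_exp b m x - 2 * PI * b * cpoly_exp b (S m) x)).
    apply is_derive_cpoly_exp.
Qed.

Lemma cpoly_at_0 b n : cpoly b (S n) 0 = c (S n) b / INR (fact n).
Proof.
  unfold cpoly. simpl sum_lt. rewrite Nat.sub_diag, sum_lt_eq0.
  - simpl. field. apply INR_fact_neq_0.
  - intros i Hi. rewrite pow_i by lia. unfold Rdiv; ring.
Qed.

Lemma cpoly_at_1 b n :
  cpoly b (S n) 1 =
  (1 + sum_lt (fun i => Binomial.C n i * Li_neg i (exp (- 2 * PI * b))) (S n)) / INR (fact n).
Proof.
  unfold cpoly.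
  rewrite (sum_lt_ext _ (fun i => / INR (fact n) *
                                  (Binomial.C n i * (if Nat.eqb (S i) 1 then 1 else 0)
                                   + Binomial.C n i * Li_neg i (exp (- 2 * PI * b))))).
  - rewrite sum_lt_scal, sum_lt_plus, sum_lt_shift, sum_lt_eq0 by (intros; simpl; ring).
    simpl. rewrite C_n_0. field. apply INR_fact_neq_0.
  - intros i Hi. unfold c, Binomial.C. rewrite pow1. simpl (S i - 1)%nat. rewrite Nat.sub_0_r.
    replace (S n - S i)%nat with (n - i)%nat by lia.
    field. repeat split; apply INR_fact_neq_0.
Qed.

Lemma exp_neq_1 b : b <> 0 -> exp (- 2 * PI * b) <> 1.
Proof.
  intros Hb E. rewrite <- exp_0 in E. apply exp_inv in E.
  pose proof PI_RGT_0. apply Hb. nra.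
Qed.

(* This is where the constants [c_j] come from: they make the boundary term vanish for [p > 0]. *)
Lemma cpoly_exp_boundary b p : b <> 0 ->
  cpoly_exp b (S p) 1 - cpoly_exp b (S p) 0 = - (if Nat.eqb p 0 then 1 else 0).
Proof.
  intros Hb. unfold cpoly_exp.
  rewrite cpoly_at_0, cpoly_at_1, Rmult_0_r, exp_0, Rmult_1_r, Rmult_1_r.
  unfold c. rewrite Nat.sub_succ, Nat.sub_0_r, (Li_neg_binomial p) by now apply exp_neq_1.
  destruct p; simpl Nat.eqb; cbv iota; [simpl; field|field; apply INR_fact_neq_0].
Qed.

Lemma continuous_cpoly_exp_sub b m m' a x :
  continuous (fun u => cpoly_exp b m u - a * cpoly_exp b m' u) x.
Proof.
  apply (continuous_minus (V := R_NormedModule)); [apply continuous_cpoly_exp|].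
  apply (continuous_scal_r (K := R_AbsRing) (V := R_NormedModule)), continuous_cpoly_exp.
Qed.

Lemma cpoly_exp_0_eq_1 b k : b <> 0 -> (2 <= k)%nat -> cpoly_exp b k 0 = cpoly_exp b k 1.
Proof.
  intros Hb Hk. destruct k as [|[|p]]; [lia|lia|].
  pose proof (cpoly_exp_boundary b (S p) Hb). simpl Nat.eqb in *. lra.
Qed.

Lemma is_derive_cpoly_exp_sub b k x : (1 <= k)%nat ->
  is_derive (fun u => cpoly_exp b k u - cpoly_exp b k 1) x
    (cpoly_exp b (k - 1) x - 2 * PI * b * cpoly_exp b k x).
Proof.
  intros Hk. destruct k as [|p]; [lia|]. rewrite Nat.sub_succ, Nat.sub_0_r.
  rewrite <- (Rminus_0_r (_ - _ * _ * cpoly_exp b (S p) x)).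
  apply (is_derive_minus _ (fun _ => cpoly_exp b (S p) 1)).
  - apply is_derive_cpoly_exp.
  - auto_derive; auto.
Qed.

Lemma integrand_eq k b u : (1 <= k)%nat ->
  integrand k b u = (cpoly_exp b k u - cpoly_exp b k 1) * cot (PI * u).
Proof.
  intros Hk. destruct k as [|p]; [lia|].
  unfold integrand, cpoly_exp, cpoly. f_equal.
  replace (S p - 1)%nat with p by lia.
  rewrite sum_f_R0_sum_lt, !(Rmult_comm (sum_lt _ _)), <- !sum_lt_scal, <- sum_lt_minus.
  apply sum_lt_ext. intros i _. cbv zeta.
  rewrite pow1, Rmult_1_r. simpl (S i - 1)%nat. rewrite Nat.sub_0_r.
  field. split; apply INR_fact_neq_0.
Qed.

(** * Fourier coefficients of [Q_m] *)

Definition cpoly_exp_coef (b : R) (m : nat) (h : R -> R) : R :=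
  RInt (fun u => cpoly_exp b m u * h u) 0 1.

Lemma is_RInt_cpoly_exp_coef b m h : (forall x, continuous h x) ->
  is_RInt (fun u => cpoly_exp b m u * h u) 0 1 (cpoly_exp_coef b m h).
Proof.
  intros Hh. apply is_RInt_continuous_on; [lra|]. intros x _.
  apply (continuous_mult (K := R_AbsRing)); [apply continuous_cpoly_exp|apply Hh].
Qed.

Lemma cpoly_exp_coef_0 b h : cpoly_exp_coef b 0 h = 0.
Proof. apply RInt_eq_0. intros x. rewrite cpoly_exp_0; ring. Qed.

(* Integration by parts, the boundary term being given by [cpoly_exp_boundary] as [h 1 = h 0]. *)
Lemma cpoly_exp_coef_S b m a (h h' : R -> R) : b <> 0 ->
  (forall x, is_derive h x (a * h' x)) -> (forall x, continuous h' x) -> h 1 = h 0 ->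
  cpoly_exp_coef b m h + (if Nat.eqb m 0 then 1 else 0) * h 0 =
  2 * PI * b * cpoly_exp_coef b (S m) h - a * cpoly_exp_coef b (S m) h'.
Proof.
  intros Hb Hh Hh' Hh1.
  assert (Hhc : forall x, continuous h x)
    by (intros x; apply (continuous_of_derive h (fun u => a * h' u)), Hh).
  assert (Hdc := continuous_cpoly_exp_sub b m (S m) (2 * PI * b)).
  assert (Hdc' : forall x, continuous (fun u => a * h' u) x).
  { intros x. apply (continuous_scal_r (K := R_AbsRing) (V := R_NormedModule)), Hh'. }
  assert (Hparts := is_RInt_parts (cpoly_exp b (S m)) h _ _ 0 1
                      (is_derive_cpoly_exp b m) Hh Hdc Hdc').
  assert (Hlin : is_RInt (fun x => (cpoly_exp b m x - 2 * PI * b * cpoly_exp b (S m) x) * h x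
                                   + cpoly_exp b (S m) x * (a * h' x)) 0 1
                   (cpoly_exp_coef b m h - 2 * PI * b * cpoly_exp_coef b (S m) h
                    + a * cpoly_exp_coef b (S m) h')).
  { apply (is_RInt_ext_R (fun x => cpoly_exp b m x * h x
                                   - 2 * PI * b * (cpoly_exp b (S m) x * h x)
                                   + a * (cpoly_exp b (S m) x * h' x))); [intros; ring|].
    apply is_RInt_plus_R; [apply is_RInt_minus_R|].
    - now apply is_RInt_cpoly_exp_coef.
    - apply is_RInt_scal_R. now apply is_RInt_cpoly_exp_coef.
    - apply is_RInt_scal_R. now apply is_RInt_cpoly_exp_coef. }
  pose proof (is_RInt_unique_R _ _ _ _ _ Hlin Hparts) as E.
  rewrite Hh1, <- Rmult_minus_distr_r, cpoly_exp_boundary in E by exact Hb.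
  destruct (Nat.eqb m 0); lra.
Qed.

Definition freq (b : R) (n : nat) : Complex.C := (2 * PI * b, 2 * PI * INR n).

Lemma freq_neq_0 b n : b <> 0 -> freq b n <> 0%C.
Proof.
  intros Hb E. apply (f_equal fst) in E. simpl in E. pose proof PI_RGT_0. apply Hb. nra.
Qed.

(* [int_0^1 Q_m(u) e^(-2 pi i n u) du], plus [1] when [m = 0]. *)
Definition fourier_coef (b : R) (m n : nat) : Complex.C :=
  (cpoly_exp_coef b m (fun u => cos (2 * PI * INR n * u)) + (if Nat.eqb m 0 then 1 else 0),
   - cpoly_exp_coef b m (fun u => sin (2 * PI * INR n * u))).

Lemma fourier_coef_0 b n : fourier_coef b 0 n = 1%C.
Proof. unfold fourier_coef, RtoC. rewrite !cpoly_exp_coef_0. simpl. f_equal; ring. Qed.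

Lemma fourier_coef_S b m n : b <> 0 ->
  Cmult (freq b n) (fourier_coef b (S m) n) = fourier_coef b m n.
Proof.
  intros Hb. unfold fourier_coef, freq, Cmult; simpl fst; simpl snd.
  set (w := 2 * PI * INR n).
  assert (Hperiod : w * 1 = 0 + 2 * INR n * PI) by (unfold w; ring).
  assert (Hcos := cpoly_exp_coef_S b m (- w) (fun u => cos (w * u)) (fun u => sin (w * u)) Hb).
  assert (Hsin := cpoly_exp_coef_S b m w (fun u => sin (w * u)) (fun u => cos (w * u)) Hb).
  cbv beta in Hcos, Hsin.
  rewrite Hperiod, Rmult_0_r, cos_period, cos_0 in Hcos.
  rewrite Hperiod, Rmult_0_r, sin_period, sin_0 in Hsin.
  specialize (Hcos ltac:(intros x; auto_derive; auto; ring) (continuous_sin_lin w) eq_refl).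
  specialize (Hsin ltac:(intros x; auto_derive; auto; ring) (continuous_cos_lin w) eq_refl).
  simpl Nat.eqb. f_equal; lra.
Qed.

Lemma fourier_coef_eq b m n : b <> 0 -> fourier_coef b m n = (/ Complex.Cpow (freq b n) m)%C.
Proof.
  intros Hb. pose proof (freq_neq_0 b n Hb) as Hz.
  induction m as [|m IH].
  - rewrite fourier_coef_0. change (Complex.Cpow (freq b n) 0) with (RtoC 1). field.
  - transitivity (/ freq b n * (freq b n * fourier_coef b (S m) n))%C; [field; exact Hz|].
    rewrite fourier_coef_S, IH, Cpow_S by exact Hb. field. split; [now apply Cpow_nz|exact Hz].
Qed.

Lemma Cpow_eq_Complex_Cpow z n : Cpow z n = Complex.Cpow z n.
Proof. induction n as [|n IH]; simpl; [reflexivity|now rewrite IH]. Qed.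

Lemma Im_term k b n : b <> 0 ->
  Im (term k b n) = - (2 * PI) ^ k * cpoly_exp_coef b k (fun u => sin (2 * PI * INR n * u)).
Proof.
  intros Hb.
  assert (Hbn : (b, INR n) <> RtoC 0) by (intros E; apply Hb; exact (f_equal fst E)).
  assert (H2pi : RtoC (2 * PI) <> RtoC 0).
  { intros E. apply (f_equal fst) in E. simpl in E. pose proof PI_RGT_0. lra. }
  assert (Hfreq : freq b n = (RtoC (2 * PI) * (b, INR n))%C)
    by (unfold freq, Cmult, RtoC; simpl; f_equal; ring).
  assert (E : Complex.Cinv (Complex.Cpow (b, INR n) k) =
              (Complex.Cpow (RtoC (2 * PI)) k * fourier_coef b k n)%C).
  { rewrite fourier_coef_eq, Hfreq, Cpow_mult_l by exact Hb.
    field. split; now apply Cpow_nz. }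
  unfold term, Im. rewrite Cpow_eq_Complex_Cpow.
  change (snd (Complex.Cinv (Complex.Cpow (b, INR n) k)) =
          - (2 * PI) ^ k * cpoly_exp_coef b k (fun u => sin (2 * PI * INR n * u))).
  rewrite E, <- RtoC_pow. unfold fourier_coef, Cmult, RtoC; simpl. ring.
Qed.

Lemma Rabs_snd_le_Cmod (z : Complex.C) : Rabs (snd z) <= Cmod z.
Proof. eapply Rle_trans; [apply Rmax_r|apply Rmax_Cmod]. Qed.

Lemma Rabs_cpoly_exp_coef_sin_le b k n : b <> 0 ->
  Rabs (cpoly_exp_coef b k (fun u => sin (2 * PI * INR n * u))) <= / Cmod (freq b n) ^ k.
Proof.
  intros Hb. rewrite <- Cmod_pow, <- Cmod_inv by now apply Cpow_nz, freq_neq_0.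
  rewrite <- fourier_coef_eq by exact Hb.
  rewrite <- Rabs_Ropp. apply (Rabs_snd_le_Cmod (fourier_coef b k n)).
Qed.

Lemma Rabs_cpoly_exp_coef_sin_le_inv_consecutive b k n : b <> 0 -> (2 <= k)%nat ->
  Rabs (cpoly_exp_coef b k (fun u => sin (2 * PI * INR n * u)))
  <= / (INR (S n) * INR (S (S n))).
Proof.
  intros Hb Hk. destruct n as [|n].
  { unfold cpoly_exp_coef. rewrite RInt_eq_0, Rabs_R0.
    - simpl. lra.
    - intros x. simpl. rewrite Rmult_0_r, Rmult_0_l, sin_0. ring. }
  eapply Rle_trans; [now apply Rabs_cpoly_exp_coef_sin_le|].
  set (z := freq b (S n)).
  assert (Hn : 1 <= INR (S n)) by (apply (le_INR 1); lia).
  assert (Hpi : 2 < PI) by (pose proof PI2_1; lra).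
  assert (Hmod : 4 * INR (S n) <= Cmod z).
  { apply Rle_trans with (Rabs (snd z)); [|apply Rabs_snd_le_Cmod].
    assert (0 <= (PI - 2) * INR (S n)) by (apply Rmult_le_pos; lra).
    change (snd z) with (2 * PI * INR (S n)). rewrite Rabs_right; lra. }
  assert (Hpow : INR (S (S n)) * INR (S (S (S n))) <= Cmod z ^ k).
  { apply Rle_trans with (Cmod z ^ 2); [|apply Rle_pow; [lra|exact Hk]].
    rewrite (S_INR (S (S n))), (S_INR (S n)).
    replace (Cmod z ^ 2) with (Cmod z * Cmod z) by ring. nra. }
  apply Rinv_le_contravar; [|exact Hpow].
  apply Rmult_lt_0_compat; apply lt_0_INR; lia.
Qed.

Lemma sum_f_R0_inv_consecutive N :
  sum_f_R0 (fun n => / (INR (S n) * INR (S (S n)))) N = 1 - / INR (S (S N)).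
Proof.
  induction N as [|N IH]; [simpl; field|].
  rewrite tech5, IH. rewrite !(S_INR (S _)), S_INR.
  pose proof (pos_INR N). field. lra.
Qed.

Lemma ex_series_inv_consecutive : ex_series (fun n => / (INR (S n) * INR (S (S n)))).
Proof.
  exists 1. apply is_series_Reals. intros eps Heps.
  destruct (archimed_cor1 eps Heps) as [N [HN HN0]].
  exists N. intros n Hn. unfold Rdist. rewrite sum_f_R0_inv_consecutive.
  assert (HNn : INR N <= INR (S (S n))) by (apply le_INR; lia).
  assert (0 < INR N) by (apply lt_0_INR; lia).
  assert (/ INR (S (S n)) <= / INR N) by (apply Rinv_le_contravar; lra).
  assert (0 < / INR (S (S n))) by (apply Rinv_0_lt_compat; lra).
  rewrite Rabs_left; lra.
Qed.

Lemma ex_series_cpoly_exp_coef_sin b k : b <> 0 -> (2 <= k)%nat ->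
  ex_series (fun n => Rabs (cpoly_exp_coef b k (fun u => sin (2 * PI * INR n * u)))).
Proof.
  intros Hb Hk.
  apply (ex_series_le (K := R_AbsRing) (V := R_CompleteNormedModule)
           _ (fun n => / (INR (S n) * INR (S (S n))))); [|exact ex_series_inv_consecutive].
  intros n. change (norm (Rabs ?x)) with (Rabs (Rabs x)). rewrite Rabs_Rabsolu.
  now apply Rabs_cpoly_exp_coef_sin_le_inv_consecutive.
Qed.

Lemma is_RInt_cpoly_exp_sub_mul_sin b k n :
  is_RInt (fun u => (cpoly_exp b k u - cpoly_exp b k 1) * sin (2 * PI * INR n * u)) 0 1
    (cpoly_exp_coef b k (fun u => sin (2 * PI * INR n * u))).
Proof.
  replace (cpoly_exp_coef b k _)
    with (cpoly_exp_coef b k (fun u => sin (2 * PI * INR n * u)) - cpoly_exp b k 1 * 0) by ring.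
  apply (is_RInt_ext_R (fun u => cpoly_exp b k u * sin (2 * PI * INR n * u)
                                 - cpoly_exp b k 1 * sin (2 * PI * INR n * u))); [intros; ring|].
  apply is_RInt_minus_R; [apply is_RInt_cpoly_exp_coef, continuous_sin_lin|].
  apply is_RInt_scal_R, is_RInt_sin_2PI_n.
Qed.

(** * The conjugate Poisson kernel *)

(* [2 sum_(n >= 1) r^n sin (n t)], see [conj_poisson_sub_sum_le]. *)
Definition conj_poisson (r t : R) : R := 2 * r * sin t / (1 - 2 * r * cos t + r ^ 2).

Definition poisson_weight (r x : R) : R :=
  4 * r * sin x ^ 2 / ((1 - r) ^ 2 + 4 * r * sin x ^ 2).

Lemma conj_poisson_denom_ge r t : 0 <= r < 1 -> (1 - r) ^ 2 <= 1 - 2 * r * cos t + r ^ 2.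
Proof. intros Hr. pose proof (COS_bound t). nra. Qed.

Lemma sin_partial_sum r t N :
  (1 - 2 * r * cos t + r ^ 2) * sum_lt (fun n => r ^ n * sin (INR n * t)) N =
  r * sin t - r ^ N * sin (INR N * t) + r ^ S N * sin ((INR N - 1) * t).
Proof.
  induction N as [|N IH].
  - simpl. rewrite Rmult_0_l, sin_0. replace ((0 - 1) * t) with (- t) by ring.
    rewrite sin_neg. ring.
  - simpl sum_lt. rewrite Rmult_plus_distr_l, IH, S_INR.
    replace ((INR N + 1) * t) with (INR N * t + t) by ring.
    replace ((INR N + 1 - 1) * t) with (INR N * t) by ring.
    replace ((INR N - 1) * t) with (INR N * t - t) by ring.
    rewrite sin_plus, sin_minus. simpl. ring.
Qed.

Lemma conj_poisson_sub_sum_le r t N : 0 <= r < 1 ->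
  Rabs (conj_poisson r t - 2 * sum_lt (fun n => r ^ n * sin (INR n * t)) N)
  <= 4 * r ^ N / (1 - r) ^ 2.
Proof.
  intros Hr. set (D := 1 - 2 * r * cos t + r ^ 2).
  assert (HD := conj_poisson_denom_ge r t Hr). fold D in HD.
  assert (HD0 : 0 < (1 - r) ^ 2) by (apply pow_lt; lra).
  assert (E : conj_poisson r t - 2 * sum_lt (fun n => r ^ n * sin (INR n * t)) N =
              2 * (r ^ N * sin (INR N * t) - r ^ S N * sin ((INR N - 1) * t)) / D).
  { assert (HS := sin_partial_sum r t N). fold D in HS.
    replace (sum_lt _ N) with
      ((r * sin t - r ^ N * sin (INR N * t) + r ^ S N * sin ((INR N - 1) * t)) / D)
      by (rewrite <- HS; field; lra).
    unfold conj_poisson; fold D. field; lra. }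
  rewrite E. unfold Rdiv. rewrite Rabs_mult, Rabs_inv, (Rabs_right D) by lra.
  assert (HrN : 0 <= r ^ N) by (apply pow_le; lra).
  assert (HrSN : 0 <= r ^ S N <= r ^ N) by (split; [apply pow_le|simpl]; nra).
  assert (Hnum : Rabs (2 * (r ^ N * sin (INR N * t) - r ^ S N * sin ((INR N - 1) * t)))
                 <= 4 * r ^ N).
  { pose proof (SIN_bound (INR N * t)). pose proof (SIN_bound ((INR N - 1) * t)).
    apply Rabs_le. split; nra. }
  apply Rmult_le_compat; try lra.
  - apply Rabs_pos.
  - left; apply Rinv_0_lt_compat; lra.
  - apply Rinv_le_contravar; lra.
Qed.

Lemma continuous_conj_poisson r t : 0 <= r < 1 -> continuous (conj_poisson r) t.
Proof.
  intros Hr. pose proof (conj_poisson_denom_ge r t Hr).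
  assert (0 < (1 - r) ^ 2) by (apply pow_lt; lra).
  apply (ex_derive_continuous (V := R_NormedModule)). unfold conj_poisson.
  auto_derive. lra.
Qed.

Lemma continuous_mul_conj_poisson (g : R -> R) r u : continuous g u -> 0 <= r < 1 ->
  continuous (fun u => g u * conj_poisson r (2 * PI * u)) u.
Proof.
  intros Hg Hr. apply (continuous_mult (K := R_AbsRing)); [exact Hg|].
  apply (continuous_comp (fun u => 2 * PI * u) (conj_poisson r)).
  - apply (continuous_of_derive _ (fun _ => 2 * PI)). auto_derive; auto; ring.
  - now apply continuous_conj_poisson.
Qed.

Lemma conj_poisson_double r x : 0 <= r < 1 -> sin x <> 0 ->
  conj_poisson r (2 * x) = cot x * poisson_weight r x.
Proof.
  intros Hr Hx.
  assert (0 < (1 - r) ^ 2) by (apply pow_lt; lra).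
  assert (0 <= 4 * r * sin x ^ 2) by (apply Rmult_le_pos; [lra|apply pow2_ge_0]).
  unfold conj_poisson, poisson_weight, cot. rewrite sin_2a, cos_2a_sin.
  field. split; [lra|exact Hx].
Qed.

Lemma poisson_weight_bounds r x : 0 <= r < 1 -> 0 <= poisson_weight r x <= 1.
Proof.
  intros Hr. unfold poisson_weight.
  assert (0 < (1 - r) ^ 2) by (apply pow_lt; lra).
  assert (0 <= 4 * r * sin x ^ 2) by (apply Rmult_le_pos; [lra|apply pow2_ge_0]).
  split; [apply Rmult_le_pos; [lra|left; apply Rinv_0_lt_compat; lra]|].
  apply (Rmult_le_reg_r ((1 - r) ^ 2 + 4 * r * sin x ^ 2)); [lra|].
  unfold Rdiv. rewrite Rmult_assoc, Rinv_l; lra.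
Qed.

Lemma one_sub_poisson_weight_le r x : 1 / 2 <= r < 1 -> sin x <> 0 ->
  1 - poisson_weight r x <= (1 - r) / (2 * sin x ^ 2).
Proof.
  intros Hr Hx. unfold poisson_weight.
  assert (Hs : 0 < sin x ^ 2) by (apply pow2_gt_0; exact Hx).
  assert (0 < (1 - r) ^ 2) by (apply pow_lt; lra).
  replace (1 - _) with ((1 - r) ^ 2 / ((1 - r) ^ 2 + 4 * r * sin x ^ 2)) by (field; nra).
  apply (Rmult_le_reg_r ((1 - r) ^ 2 + 4 * r * sin x ^ 2)); [nra|].
  unfold Rdiv. rewrite Rmult_assoc, Rinv_l by nra.
  apply (Rmult_le_reg_r (2 * sin x ^ 2)); [lra|].
  replace ((1 - r) * / (2 * sin x ^ 2) * ((1 - r) ^ 2 + 4 * r * sin x ^ 2) * (2 * sin x ^ 2))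
    with ((1 - r) * ((1 - r) ^ 2 + 4 * r * sin x ^ 2)) by (field; lra).
  assert (0 <= (1 - r) * sin x ^ 2 * (3 * r - 1))
    by (apply Rmult_le_pos; [apply Rmult_le_pos|]; lra).
  assert (0 <= (1 - r) ^ 3) by (apply pow_le; lra).
  nra.
Qed.

Lemma is_RInt_mul_sin_sum (g : R -> R) (y : nat -> R) r N :
  (forall n, is_RInt (fun u => g u * sin (2 * PI * INR n * u)) 0 1 (y n)) ->
  is_RInt (fun u => g u * sum_lt (fun n => r ^ n * sin (INR n * (2 * PI * u))) N) 0 1
    (sum_lt (fun n => r ^ n * y n) N).
Proof.
  intros Hy. induction N as [|N IH]; simpl sum_lt.
  - assert (H0 := is_RInt_const_R 0 0 1). rewrite Rmult_0_r in H0.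
    apply (is_RInt_ext_R (fun _ => 0)); [intros; ring|exact H0].
  - apply (is_RInt_ext_R (fun u => g u * sum_lt (fun n => r ^ n * sin (INR n * (2 * PI * u))) N
                                   + r ^ N * (g u * sin (2 * PI * INR N * u)))).
    { intros u. replace (2 * PI * INR N * u) with (INR N * (2 * PI * u)) by ring. ring. }
    apply is_RInt_plus_R; [exact IH|].
    apply is_RInt_scal_R, Hy.
Qed.

Lemma Rabs_RInt_conj_poisson_sub_sum_le (g : R -> R) (y : nat -> R) r G N :
  (forall u, continuous g u) -> (forall u, 0 <= u <= 1 -> Rabs (g u) <= G) ->
  (forall n, is_RInt (fun u => g u * sin (2 * PI * INR n * u)) 0 1 (y n)) -> 0 <= r < 1 ->
  Rabs (RInt (fun u => g u * conj_poisson r (2 * PI * u)) 0 1 - 2 * sum_lt (fun n => r ^ n * y n) N)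
  <= G * (4 * r ^ N / (1 - r) ^ 2).
Proof.
  intros Hg HG Hy Hr.
  assert (HI := is_RInt_continuous_on (fun u => g u * conj_poisson r (2 * PI * u)) 0 1
                  ltac:(lra) (fun u _ => continuous_mul_conj_poisson g r u (Hg u) Hr)).
  assert (Hdiff := is_RInt_minus_R _ _ 0 1 _ _ HI
                     (is_RInt_scal_R _ 0 1 2 _ (is_RInt_mul_sin_sum g y r N Hy))).
  replace (G * _) with ((1 - 0) * (G * (4 * r ^ N / (1 - r) ^ 2))) by ring.
  apply (is_RInt_abs_le _ 0 1 _ _ ltac:(lra) Hdiff). intros u Hu.
  replace (_ - _) with (g u * (conj_poisson r (2 * PI * u)
                               - 2 * sum_lt (fun n => r ^ n * sin (INR n * (2 * PI * u))) N))
    by ring.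
  rewrite Rabs_mult. apply Rmult_le_compat; try apply Rabs_pos.
  - apply HG; lra.
  - apply conj_poisson_sub_sum_le, Hr.
Qed.

Lemma infinite_sum_RInt_conj_poisson (g : R -> R) (y : nat -> R) r :
  (forall u, continuous g u) ->
  (forall n, is_RInt (fun u => g u * sin (2 * PI * INR n * u)) 0 1 (y n)) -> 0 <= r < 1 ->
  infinite_sum (fun n => y n * r ^ n) (RInt (fun u => g u * conj_poisson r (2 * PI * u)) 0 1 / 2).
Proof.
  intros Hg Hy Hr eps Heps.
  destruct (continuous_bounded g 0 1 ltac:(lra) Hg) as [G HG].
  assert (HG0 : 0 <= G) by (pose proof (HG 0 ltac:(lra)); pose proof (Rabs_pos (g 0)); lra).
  assert (H1r : 0 < (1 - r) ^ 2) by (apply pow_lt; lra).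
  destruct (pow_lt_1_zero r ltac:(rewrite Rabs_right; lra) (eps * (1 - r) ^ 2 / (2 * (G + 1))))
    as [N HN].
  { apply Rdiv_lt_0_compat; [apply Rmult_lt_0_compat|]; lra. }
  exists N. intros n Hn. unfold Rdist. rewrite sum_f_R0_sum_lt.
  rewrite (sum_lt_ext _ (fun i => r ^ i * y i)) by (intros; ring).
  set (I := RInt (fun u => g u * conj_poisson r (2 * PI * u)) 0 1).
  set (S_n := sum_lt (fun i => r ^ i * y i) (S n)).
  assert (Hbound := Rabs_RInt_conj_poisson_sub_sum_le g y r G (S n) Hg HG Hy Hr).
  fold I S_n in Hbound.
  assert (Hsmall : 2 * (G + 1) * r ^ S n < eps * (1 - r) ^ 2).
  { specialize (HN (S n) ltac:(lia)). rewrite Rabs_right in HN by (apply Rle_ge, pow_le; lra).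
    apply (Rmult_lt_compat_l (2 * (G + 1))) in HN; [|lra].
    replace (2 * (G + 1) * (eps * (1 - r) ^ 2 / (2 * (G + 1)))) with (eps * (1 - r) ^ 2)
      in HN by (field; lra). exact HN. }
  replace (S_n - I / 2) with (- (I - 2 * S_n) / 2) by field.
  unfold Rdiv. rewrite Rabs_mult, Rabs_Ropp, (Rabs_right (/ 2)) by lra.
  apply (Rmult_lt_reg_r (2 * (1 - r) ^ 2)); [lra|].
  apply Rle_lt_trans with (4 * G * r ^ S n).
  - replace (Rabs (I - 2 * S_n) * / 2 * (2 * (1 - r) ^ 2))
      with (Rabs (I - 2 * S_n) * (1 - r) ^ 2) by field.
    replace (4 * G * r ^ S n) with (G * (4 * r ^ S n / (1 - r) ^ 2) * (1 - r) ^ 2) by (field; lra).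
    apply Rmult_le_compat_r; lra.
  - pose proof (pow_le r (S n) ltac:(lra)). nra.
Qed.

(** * Abel summation and improper integrals *)

(* Either the radius of convergence exceeds [1] and [PSeries a] is continuous at [1], or it
   equals [1] and Coquelicot's [Abel] applies. *)
Lemma PSeries_at_left_1 (a : nat -> R) :
  ex_series (fun n => Rabs (a n)) -> filterlim (PSeries a) (at_left 1) (locally (Series a)).
Proof.
  intros Ha.
  assert (Hdisk : CV_disk a 1).
  { apply (ex_series_ext (fun n => Rabs (a n))); [|exact Ha].
    intros n. now rewrite pow1, Rmult_1_r. }
  assert (HPS1 : PSeries a 1 = Series a).
  { unfold PSeries. apply Series_ext. intros n. now rewrite pow1, Rmult_1_r. }
  assert (Hle : Rbar_le 1 (CV_radius a)) by exact (proj1 (Lub_Rbar_correct (CV_disk a)) 1 Hdisk).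
  rewrite <- HPS1.
  destruct (Rbar_le_lt_or_eq_dec _ _ Hle) as [Hlt|Heq].
  - apply (filterlim_filter_le_1 (F := locally 1)); [apply filter_le_within|].
    apply continuity_pt_filterlim, PSeries_continuity. now rewrite Rabs_R1.
  - pose proof (Abel a) as HAbel. rewrite <- Heq in HAbel. apply HAbel.
    + simpl; lra.
    + exact I.
    + now apply CV_disk_correct.
Qed.

Lemma at_left_1_between r0 : r0 < 1 -> at_left 1 (fun r => r0 < r < 1).
Proof.
  intros Hr0. assert (Hd : 0 < 1 - r0) by lra.
  exists (mkposreal _ Hd). intros r Hr Hr1. change (Rabs (r - 1) < 1 - r0) in Hr.
  apply Rabs_lt_between in Hr. lra.
Qed.

Lemma improper_integral_01_ext (F G : R -> R) (L : R) :
  (forall u, F u = G u) -> improper_integral_01 F L -> improper_integral_01 G L.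
Proof.
  intros HFG [HF Hlim]. split.
  - intros a b Ha Hab Hb. destruct (HF a b Ha Hab Hb) as [pr].
    constructor. exact (Riemann_integrable_ext G (fun x _ => HFG x) pr).
  - intros eps Heps. destruct (Hlim eps Heps) as [delta [Hdelta Hclose]].
    exists delta. split; [exact Hdelta|]. intros a b pr Ha Hb.
    set (prF := Riemann_integrable_ext F (fun x _ => eq_sym (HFG x)) pr).
    rewrite <- (RiemannInt_ext F G a b prF pr (fun x _ => HFG x)). now apply Hclose.
Qed.

Lemma RInt_approx_estimate (F G : R -> R) (B eps d a b : R) :
  (forall u, 0 < u < 1 -> continuous F u) -> (forall u, continuous G u) ->
  (forall u, 0 < u < 1 -> Rabs (G u) <= B /\ Rabs (F u - G u) <= B) ->
  (forall u, d <= u <= 1 - d -> Rabs (F u - G u) <= eps) ->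
  0 < a <= d -> d <= 1 - d -> 1 - d <= b < 1 ->
  Rabs (RInt F a b - RInt G 0 1) <= 2 * B * d + eps.
Proof.
  intros HF HG HB Heps Ha Hd Hb.
  set (H := fun u => F u - G u).
  assert (HHc : forall x y, 0 < x -> x <= y -> y < 1 -> is_RInt H x y (RInt H x y)).
  { intros x y Hx Hxy Hy. apply is_RInt_continuous_on; [exact Hxy|]. intros u Hu.
    apply (continuous_minus (V := R_NormedModule)); [apply HF; lra|apply HG]. }
  assert (HGc : forall x y, x <= y -> is_RInt G x y (RInt G x y))
    by (intros x y Hxy; apply is_RInt_continuous_on; auto).
  assert (HFab := is_RInt_continuous_on F a b ltac:(lra) (fun u Hu => HF u ltac:(lra))).
  assert (EG : RInt G 0 1 = RInt G 0 a + RInt G a b + RInt G b 1).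
  { apply (is_RInt_unique_R G 0 1); [apply HGc; lra|].
    apply (is_RInt_Chasles_R G 0 b 1); [apply (is_RInt_Chasles_R G 0 a b)|]; apply HGc; lra. }
  assert (EH : RInt F a b - RInt G a b = RInt H a d + RInt H d (1 - d) + RInt H (1 - d) b).
  { apply (is_RInt_unique_R H a b); [apply is_RInt_minus_R; [exact HFab|apply HGc; lra]|].
    apply (is_RInt_Chasles_R H a (1 - d) b); [apply (is_RInt_Chasles_R H a d (1 - d))|];
      apply HHc; lra. }
  assert (B1 := is_RInt_abs_le H a d _ B ltac:(lra) (HHc a d ltac:(lra) ltac:(lra) ltac:(lra))
                  (fun u Hu => proj2 (HB u ltac:(lra)))).
  assert (B2 := is_RInt_abs_le H d (1 - d) _ eps ltac:(lra)
                  (HHc d (1 - d) ltac:(lra) ltac:(lra) ltac:(lra)) (fun u Hu => Heps u ltac:(lra))).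
  assert (B3 := is_RInt_abs_le H (1 - d) b _ B ltac:(lra)
                  (HHc (1 - d) b ltac:(lra) ltac:(lra) ltac:(lra))
                  (fun u Hu => proj2 (HB u ltac:(lra)))).
  assert (B4 := is_RInt_abs_le G 0 a _ B ltac:(lra) (HGc 0 a ltac:(lra))
                  (fun u Hu => proj1 (HB u ltac:(lra)))).
  assert (B5 := is_RInt_abs_le G b 1 _ B ltac:(lra) (HGc b 1 ltac:(lra))
                  (fun u Hu => proj1 (HB u ltac:(lra)))).
  assert (HB0 : 0 <= B) by (pose proof (Rabs_pos (G (1/2))); pose proof (HB (1/2) ltac:(lra)); lra).
  assert (Heps0 : 0 <= eps)
    by (pose proof (Rabs_pos (H d)); pose proof (Heps d ltac:(lra)); unfold H in *; lra).
  replace (RInt F a b - RInt G 0 1)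
    with (RInt H a d + RInt H d (1 - d) + RInt H (1 - d) b - RInt G 0 a - RInt G b 1) by lra.
  assert (Hsub : forall x y : R, Rabs (x - y) <= Rabs x + Rabs y).
  { intros x y. unfold Rminus. rewrite <- (Rabs_Ropp y). apply Rabs_triang. }
  pose proof (Rabs_triang (RInt H a d) (RInt H d (1 - d))).
  pose proof (Rabs_triang (RInt H a d + RInt H d (1 - d)) (RInt H (1 - d) b)).
  pose proof (Hsub (RInt H a d + RInt H d (1 - d) + RInt H (1 - d) b) (RInt G 0 a)).
  pose proof (Hsub (RInt H a d + RInt H d (1 - d) + RInt H (1 - d) b - RInt G 0 a) (RInt G b 1)).
  nra.
Qed.

Lemma improper_integral_01_approx (F : R -> R) (K : R -> R -> R) (B L : R) :
  (forall u, 0 < u < 1 -> continuous F u) ->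
  at_left 1 (fun r => (forall u, continuous (K r) u) /\
                      forall u, 0 < u < 1 -> Rabs (K r u) <= B /\ Rabs (F u - K r u) <= B) ->
  (forall d eps, 0 < d -> 0 < eps ->
     at_left 1 (fun r => forall u, d <= u <= 1 - d -> Rabs (F u - K r u) <= eps)) ->
  filterlim (fun r => RInt (K r) 0 1) (at_left 1) (locally L) ->
  improper_integral_01 F L.
Proof.
  intros HF HK Hunif Hlim. split.
  { intros a b Ha Hab Hb. constructor. apply ex_RInt_Reals_0.
    eexists. apply is_RInt_continuous_on; [exact Hab|]. intros u Hu; apply HF; lra. }
  intros eps Heps.
  set (B' := Rabs B + 1).
  assert (HB' : 0 < B') by (unfold B'; pose proof (Rabs_pos B); lra).
  set (d := Rmin (1 / 4) (eps / (4 * B'))).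
  assert (Hd : 0 < d <= 1 / 4).
  { split; [apply Rmin_glb_lt; [lra|apply Rdiv_lt_0_compat; lra]|apply Rmin_l]. }
  assert (HBd : 2 * B * d <= eps / 2).
  { apply Rle_trans with (2 * B' * d).
    { pose proof (Rle_abs B). unfold B' in *. nra. }
    apply Rle_trans with (2 * B' * (eps / (4 * B'))).
    - apply Rmult_le_compat_l; [lra|apply Rmin_r].
    - right. field. lra. }
  assert (Heps4 : 0 < eps / 4) by lra.
  assert (Hlim' := proj1 (filterlim_locally (F := at_left 1) _ _) Hlim (mkposreal _ Heps4)).
  assert (Hev := filter_and (F := at_left 1) _ _ HK
                   (filter_and (F := at_left 1) _ _ (Hunif d _ (proj1 Hd) Heps4) Hlim')).
  destruct (filter_ex (F := at_left 1) _ Hev) as [r [[HKc HKb] [Hu Hl]]].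
  change (Rabs (RInt (K r) 0 1 - L) < eps / 4) in Hl.
  exists d. split; [lra|]. intros a b pr Ha Hb.
  rewrite <- RInt_Reals.
  assert (Hest := RInt_approx_estimate F (K r) B (eps / 4) d a b HF HKc HKb Hu
                    ltac:(lra) ltac:(lra) ltac:(lra)).
  replace (RInt F a b - L) with ((RInt F a b - RInt (K r) 0 1) + (RInt (K r) 0 1 - L)) by ring.
  eapply Rle_lt_trans; [apply Rabs_triang|]. lra.
Qed.

(** * The improper integral against [cot (PI u)] *)

Lemma sin_ge_third x : 0 <= x <= 2 -> x / 3 <= sin x.
Proof.
  intros Hx. assert (Hpi : 2 < PI) by (pose proof PI2_1; lra).
  destruct (sin_bound x 0 ltac:(lra) ltac:(lra)) as [H _].
  unfold sin_approx, sin_term in H. simpl in H.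
  assert (x * x <= 4) by nra. nra.
Qed.

Lemma sin_PI_ge u : 0 <= u <= 1 -> 2 / 3 * Rmin u (1 - u) <= sin (PI * u).
Proof.
  intros Hu. assert (Hpi : 2 < PI <= 4) by (pose proof PI2_1; pose proof PI_4; lra).
  destruct (Rle_dec u (1 / 2)) as [Hh|Hh].
  - rewrite Rmin_left by lra. pose proof (sin_ge_third (PI * u) ltac:(nra)). nra.
  - rewrite Rmin_right by lra. rewrite <- sin_PI_x.
    replace (PI - PI * u) with (PI * (1 - u)) by ring.
    pose proof (sin_ge_third (PI * (1 - u)) ltac:(nra)). nra.
Qed.

Lemma continuous_cot_PI u : 0 < u < 1 -> continuous (fun u => cot (PI * u)) u.
Proof.
  intros Hu. assert (Hs : 0 < sin (PI * u)) by (apply sin_gt_0; pose proof PI_RGT_0; nra).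
  apply (ex_derive_continuous (V := R_NormedModule)). unfold cot. auto_derive. lra.
Qed.

(* [g] vanishes to first order at both ends, compensating the poles of [cot (PI u)]. *)
Lemma bounded_mul_cot (g g' : R -> R) :
  (forall x, is_derive g x (g' x)) -> (forall x, continuous g' x) -> g 0 = 0 -> g 1 = 0 ->
  exists B, forall u, 0 < u < 1 -> Rabs (g u * cot (PI * u)) <= B.
Proof.
  intros Hg Hg' Hg0 Hg1.
  destruct (continuous_bounded g' 0 1 ltac:(lra) Hg') as [M HM].
  exists (3 / 2 * M). intros u Hu.
  assert (Hleft := Rabs_sub_le_of_derive g g' M 0 u ltac:(lra) Hg Hg'
                     (fun x Hx => HM x ltac:(lra))).
  assert (Hright := Rabs_sub_le_of_derive g g' M u 1 ltac:(lra) Hg Hg'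
                      (fun x Hx => HM x ltac:(lra))).
  rewrite Hg0, Rminus_0_r, Rminus_0_r in Hleft. rewrite Hg1, Rminus_0_l, Rabs_Ropp in Hright.
  assert (Hmin : 0 < Rmin u (1 - u)) by (apply Rmin_glb_lt; lra).
  assert (Hgu : Rabs (g u) <= Rmin u (1 - u) * M) by (apply Rmin_case; lra).
  assert (Hsin := sin_PI_ge u ltac:(lra)).
  assert (HM0 : 0 <= M) by (pose proof (Rabs_pos (g u)); nra).
  unfold cot. rewrite Rabs_mult. unfold Rdiv.
  rewrite Rabs_mult, Rabs_inv, (Rabs_right (sin _)) by lra.
  assert (Hcos : Rabs (cos (PI * u)) <= 1) by (apply Rabs_le, COS_bound).
  apply Rle_trans with (Rmin u (1 - u) * M * (1 * / (2 / 3 * Rmin u (1 - u)))).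
  - assert (0 < / sin (PI * u)) by (apply Rinv_0_lt_compat; lra).
    apply Rmult_le_compat; [apply Rabs_pos| |exact Hgu|].
    { apply Rmult_le_pos; [apply Rabs_pos|lra]. }
    apply Rmult_le_compat; [apply Rabs_pos|lra|exact Hcos|].
    apply Rinv_le_contravar; lra.
  - right. field. lra.
Qed.

Lemma mul_conj_poisson_eq (g : R -> R) r u : 0 <= r < 1 -> 0 < u < 1 ->
  g u * conj_poisson r (2 * PI * u) = g u * cot (PI * u) * poisson_weight r (PI * u).
Proof.
  intros Hr Hu. assert (Hs : 0 < sin (PI * u)) by (apply sin_gt_0; pose proof PI_RGT_0; nra).
  replace (2 * PI * u) with (2 * (PI * u)) by ring.
  rewrite conj_poisson_double by lra. ring.
Qed.

Section ConjPoissonRegularization.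

Variables (g : R -> R) (B : R).
Hypothesis Hg : forall u, continuous g u.
Hypothesis HB : forall u, 0 < u < 1 -> Rabs (g u * cot (PI * u)) <= B.

Lemma eventually_conj_poisson_bounded :
  at_left 1 (fun r =>
    (forall u, continuous (fun u => g u * conj_poisson r (2 * PI * u)) u) /\
    forall u, 0 < u < 1 ->
      Rabs (g u * conj_poisson r (2 * PI * u)) <= B /\
      Rabs (g u * cot (PI * u) - g u * conj_poisson r (2 * PI * u)) <= B).
Proof.
  apply (filter_imp (fun r => 0 < r < 1)); [|apply at_left_1_between; lra].
  intros r Hr. split; [intros u; apply continuous_mul_conj_poisson; auto; lra|].
  intros u Hu. rewrite mul_conj_poisson_eq by lra.
  pose proof (poisson_weight_bounds r (PI * u) ltac:(lra)). pose proof (HB u Hu).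
  replace (_ - _) with (g u * cot (PI * u) * (1 - poisson_weight r (PI * u))) by ring.
  rewrite Rabs_mult, (Rabs_mult _ (1 - _)), (Rabs_right (poisson_weight _ _)),
    (Rabs_right (1 - _)) by lra.
  pose proof (Rabs_pos (g u * cot (PI * u))). split; nra.
Qed.

Lemma eventually_conj_poisson_close d eps : 0 < d -> 0 < eps ->
  at_left 1 (fun r => forall u, d <= u <= 1 - d ->
    Rabs (g u * cot (PI * u) - g u * conj_poisson r (2 * PI * u)) <= eps).
Proof.
  intros Hd Heps. set (s := 2 / 3 * d). set (B' := Rabs B + 1).
  assert (Hs : 0 < s) by (unfold s; lra).
  assert (Hs0 : 0 < s ^ 2) by (apply pow_lt; lra).
  assert (HB' : 0 < B') by (unfold B'; pose proof (Rabs_pos B); lra).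
  set (delta := Rmin (1 / 2) (2 * s ^ 2 * eps / B')).
  assert (Hdelta : 0 < delta <= 1 / 2).
  { split; [|apply Rmin_l]. apply Rmin_glb_lt; [lra|].
    apply Rdiv_lt_0_compat; [apply Rmult_lt_0_compat|]; lra. }
  assert (Hdelta' : delta <= 2 * s ^ 2 * eps / B') by apply Rmin_r.
  apply (filter_imp (fun r => 1 - delta < r < 1)); [|apply at_left_1_between; lra].
  intros r Hr u Hu.
  assert (Hsin : s <= sin (PI * u)).
  { eapply Rle_trans; [|apply sin_PI_ge; lra]. unfold s.
    apply Rmult_le_compat_l; [lra|]. apply Rmin_glb; lra. }
  assert (Hs2 : s ^ 2 <= sin (PI * u) ^ 2) by (apply pow_incr; lra).
  rewrite mul_conj_poisson_eq by lra.
  replace (_ - _) with (g u * cot (PI * u) * (1 - poisson_weight r (PI * u))) by ring.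
  pose proof (poisson_weight_bounds r (PI * u) ltac:(lra)).
  pose proof (one_sub_poisson_weight_le r (PI * u) ltac:(lra) ltac:(nra)).
  rewrite Rabs_mult, (Rabs_right (1 - _)) by lra.
  pose proof (HB u ltac:(lra)). pose proof (Rle_abs B).
  pose proof (Rabs_pos (g u * cot (PI * u))).
  apply Rle_trans with (B' * ((1 - r) / (2 * s ^ 2))).
  - apply Rmult_le_compat; try (unfold B'; lra).
    apply Rle_trans with ((1 - r) / (2 * sin (PI * u) ^ 2)); [lra|].
    apply Rmult_le_compat_l; [lra|]. apply Rinv_le_contravar; lra.
  - apply (Rmult_le_reg_r (2 * s ^ 2 / B')); [apply Rdiv_lt_0_compat; lra|].
    replace (B' * ((1 - r) / (2 * s ^ 2)) * (2 * s ^ 2 / B')) with (1 - r) by (field; lra).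
    replace (eps * (2 * s ^ 2 / B')) with (2 * s ^ 2 * eps / B') by (field; lra).
    lra.
Qed.

End ConjPoissonRegularization.

Lemma RInt_conj_poisson_lim (g : R -> R) (y : nat -> R) :
  (forall u, continuous g u) ->
  (forall n, is_RInt (fun u => g u * sin (2 * PI * INR n * u)) 0 1 (y n)) ->
  ex_series (fun n => Rabs (y n)) ->
  filterlim (fun r => RInt (fun u => g u * conj_poisson r (2 * PI * u)) 0 1)
    (at_left 1) (locally (2 * Series y)).
Proof.
  intros Hg Hy Hys.
  apply (filterlim_ext_loc (fun r => 2 * PSeries y r)).
  - apply (filter_imp (fun r => 0 < r < 1)); [|apply at_left_1_between; lra].
    intros r Hr.
    rewrite (is_pseries_unique y r (RInt (fun u => g u * conj_poisson r (2 * PI * u)) 0 1 / 2)).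
    + field.
    + apply is_pseries_Reals, infinite_sum_RInt_conj_poisson; auto; lra.
  - apply (filterlim_comp _ _ _ (PSeries y) (fun x => 2 * x) _ (locally (Series y))).
    + now apply PSeries_at_left_1.
    + exact (filterlim_scal_r (K := R_AbsRing) (V := R_NormedModule) 2 (Series y)).
Qed.

Theorem improper_integral_cot (g g' : R -> R) (y : nat -> R) :
  (forall x, is_derive g x (g' x)) -> (forall x, continuous g' x) -> g 0 = 0 -> g 1 = 0 ->
  (forall n, is_RInt (fun u => g u * sin (2 * PI * INR n * u)) 0 1 (y n)) ->
  ex_series (fun n => Rabs (y n)) ->
  improper_integral_01 (fun u => g u * cot (PI * u)) (2 * Series y).
Proof.
  intros Hg Hg' Hg0 Hg1 Hy Hys.
  assert (Hgc : forall u, continuous g u) by (intros u; apply (continuous_of_derive g g'), Hg).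
  destruct (bounded_mul_cot g g' Hg Hg' Hg0 Hg1) as [B HB].
  apply (improper_integral_01_approx _ (fun r u => g u * conj_poisson r (2 * PI * u)) B).
  - intros u Hu. apply (continuous_mult (K := R_AbsRing)); [apply Hgc|now apply continuous_cot_PI].
  - exact (eventually_conj_poisson_bounded g B Hgc HB).
  - exact (eventually_conj_poisson_close g B HB).
  - now apply RInt_conj_poisson_lim.
Qed.

Theorem mainTheorem2 (k : nat) (b : R) (hk : (2 <= k)%nat) (hb : b <> 0) :
  exists I : R,
    improper_integral_01 (integrand k b) I /\
    infinite_sum (fun j => Im (term k b j)) (- (2 * PI) ^ k / 2 * I).
Proof.
  set (y := fun n => cpoly_exp_coef b k (fun u => sin (2 * PI * INR n * u))).
  assert (Hys : ex_series (fun n => Rabs (y n)))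
    by exact (ex_series_cpoly_exp_coef_sin b k hb hk).
  exists (2 * Series y). split.
  - apply (improper_integral_01_ext _ _ _ (fun u => eq_sym (integrand_eq k b u ltac:(lia)))).
    apply (improper_integral_cot _ (fun u => cpoly_exp b (k - 1) u - 2 * PI * b * cpoly_exp b k u)).
    + intros x. apply is_derive_cpoly_exp_sub. lia.
    + apply continuous_cpoly_exp_sub.
    + rewrite cpoly_exp_0_eq_1 by assumption. ring.
    + ring.
    + apply is_RInt_cpoly_exp_sub_mul_sin.
    + exact Hys.
  - apply is_series_Reals, (is_series_ext (fun n => - (2 * PI) ^ k * y n)).
    + intros n. symmetry. now apply Im_term.
    + replace (- (2 * PI) ^ k / 2 * (2 * Series y)) with (- (2 * PI) ^ k * Series y) by field.
      apply (is_series_scal_l (K := R_AbsRing) (V := R_NormedModule)).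
      now apply Series_correct, ex_series_Rabs.
Qed.
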